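(* Let $a,n,b,p,k$ be positive integers with $a>b$. If there exist a partition of $\{1,\dots,p\}$ into $k$ sum-free subsets and a $b$-WS-template $(A_1,\dots,A_{n+1})$ with width $a$ and $n+1$ colors, then there exists a partition of $\{1,\dots,pa+b\}$ into $k+n$ weakly sum-free subsets.
   Context: A set $A \subseteq \mathbb{N}$ is sum-free if for all $(a,b)\in A^2$ (allowing $a=b$), $a+b \notin A$; it is weakly sum-free if for all $(a,b)\in A^2$ with $a\neq b$, $a+b\notin A$. For positive integers $a>b$, let $\pi(x) = (x \bmod a) + a\cdot \mathbb{1}_{\{0,\dots,b\}}(x \bmod a)$. For positive integers $a,m,b$ with $a>b$, a partition $(A_1,\dots,A_m)$ of $\{1,\dots,a+b\}$ is a $b$-WS-template with width $a$ and $m$ colors if: (i) every $A_i$ is weakly sum-free; (ii) every $A_i\setminus\{1,\dots,b\}$ is sum-free; (iii) for all $(x,y)\in A_m^2$, $x+y>b+2a$ implies $x+y-2a\notin A_m$; (iv) for all $i\in\{1,\dots,m-1\}$ and $(x,y)\in A_i^2$, $x+y>a+b$ implies $\pi(x+y)\notin A_i$. *)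

From mathcomp Require Import all_boot.
Set Implicit Arguments. Unset Strict Implicit. Unset Printing Implicit Defensive.

Definition sum_free (A : pred nat) : Prop :=
  forall x y, A x -> A y -> ~~ A (x + y).

Definition weakly_sum_free (A : pred nat) : Prop :=
  forall x y, A x -> A y -> x != y -> ~~ A (x + y).

(* A partition of {1,...,N} into m parts A_0, ..., A_(m-1) is given by a
   colouring c : nat -> 'I_m ; part i is {x in [1,N] | c x = i}. *)
Definition part (N m : nat) (c : nat -> 'I_m) (i : 'I_m) : pred nat :=
  fun x => (1 <= x <= N) && (c x == i).

Definition sf_partition (N m : nat) (c : nat -> 'I_m) : Prop :=
  forall i : 'I_m, sum_free (part N c i).

Definition wsf_partition (N m : nat) (c : nat -> 'I_m) : Prop :=
  forall i : 'I_m, weakly_sum_free (part N c i).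

Definition piab (a b x : nat) : nat :=
  x %% a + (if x %% a <= b then a else 0).

(* b-WS-template with width a and m colours (m >= 1); colours are
   0, ..., m-1, colour m-1 playing the role of A_m. *)
Definition ws_template (a b m : nat) (c : nat -> 'I_m) : Prop :=
  let A := part (a + b) c in
  (forall i, weakly_sum_free (A i)) /\
  (forall i, sum_free (fun x => A i x && (b < x))) /\
  (forall i : 'I_m, i.+1 = m -> forall x y, A i x -> A i y ->
      b + 2 * a < x + y -> ~~ A i (x + y - 2 * a)) /\
  (forall i : 'I_m, i.+1 < m -> forall x y, A i x -> A i y ->
      a + b < x + y -> ~~ A i (piab a b (x + y))).

From mathcomp Require Import all_boot zify.

(* Write x in [1, p a + b] as x = q a + r, with r = x if x <= b and b < r <= a + b
   otherwise; then q < p.  Colour x by the template colour of r if it is not the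
   last one, and otherwise by the colour of q + 1 in the sum-free partition of
   [1, p].  If x, y and x + y share a colour, their remainders satisfy
   r_x + r_y = r_(x+y) + e a with a carry e <= 2.  No carry contradicts (i)-(ii);
   a carry in a non-last colour contradicts (iv), as pi(r + e a) = r; one carry in
   the last colour gives (q_x + 1) + (q_y + 1) = q_(x+y) + 1 inside one sum-free
   part; two carries in the last colour contradict (iii). *)

Set Implicit Arguments.
Unset Strict Implicit.
Unset Printing Implicit Defensive.

Section ShiftedDivision.

Variables a b : nat.
Hypothesis lt_ba : b < a.

Definition wquo x := if x <= b then 0 else (x - b.+1) %/ a.
Definition wrem x := if x <= b then x else (x - b.+1) %% a + b.+1.

Let a_gt0 : 0 < a. Proof. exact: leq_ltn_trans lt_ba. Qed.

Lemma wdivE x : x = wquo x * a + wrem x.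
Proof.
rewrite /wquo /wrem; case: leqP => // lt_bx.
by rewrite addnA -divn_eq subnK.
Qed.

Lemma wrem_small x : x <= b -> wrem x = x.
Proof. by rewrite /wrem => ->. Qed.

Lemma wquo_small x : x <= b -> wquo x = 0.
Proof. by rewrite /wquo => ->. Qed.

Lemma leb_wrem x : (wrem x <= b) = (x <= b).
Proof.
by rewrite /wrem; case: (leqP x b) => // _; apply/negbTE; rewrite -ltnNge addnS ltnS leq_addl.
Qed.

Lemma wrem_eq_small x y : wrem x = wrem y -> wrem x <= b -> x = y.
Proof.
move=> eq_r le_rb; have le_xb : x <= b by rewrite -leb_wrem.
have le_yb : y <= b by rewrite -leb_wrem -eq_r.
by rewrite -(wrem_small le_xb) -(wrem_small le_yb).
Qed.

Lemma wrem_gt0 x : 0 < x -> 0 < wrem x.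
Proof. by rewrite /wrem addnS; case: ifP. Qed.

Lemma wrem_le x : wrem x <= a + b.
Proof.
rewrite /wrem; case: ifP => [le_xb|_]; first exact: leq_trans le_xb (leq_addl a b).
by rewrite addnS -addSn leq_add2r ltn_pmod.
Qed.

Lemma wquo_lt p x : 0 < p -> x <= p * a + b -> wquo x < p.
Proof.
move=> p_gt0 le_x; rewrite /wquo; case: ifP => // /negbT lt_bx.
by rewrite ltn_divLR //; lia.
Qed.

Lemma wdiv_uniq q r : b < r <= a + b -> wquo (q * a + r) = q /\ wrem (q * a + r) = r.
Proof.
case/andP=> lt_br le_r.
have lt_r_a : r - b.+1 < a by lia.
have /negbTE big_x : ~~ (q * a + r <= b) by rewrite -ltnNge ltn_addl.
rewrite /wquo /wrem big_x -addnBA; last exact: lt_br.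
by rewrite divnMDl // modnMDl divn_small // modn_small // addn0 subnK.
Qed.

Lemma wdiv_carry x q r e : x = q * a + r -> e * a <= r -> b < r - e * a <= a + b ->
  wquo x = q + e /\ wrem x + e * a = r.
Proof.
move=> -> le_ear range_r.
have -> : q * a + r = (q + e) * a + (r - e * a) by rewrite mulnDl -addnA subnKC.
by have [-> ->] := wdiv_uniq (q + e) range_r; rewrite subnK.
Qed.

Lemma wdivD x y : exists2 e, e <= 2 &
  [/\ wquo (x + y) = wquo x + wquo y + e,
      wrem x + wrem y = wrem (x + y) + e * a & (0 < e -> b < wrem (x + y))].
Proof.
have Exy : x + y = (wquo x + wquo y) * a + (wrem x + wrem y).
  by rewrite mulnDl addnACA -!wdivE.
have le_r : wrem x + wrem y <= 2 * (a + b) by rewrite mul2n -addnn leq_add ?wrem_le.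
case: (leqP (wrem x + wrem y) b) => [le_rb|lt_br].
  have le_xb : x <= b by rewrite -leb_wrem (leq_trans _ le_rb) ?leq_addr.
  have le_yb : y <= b by rewrite -leb_wrem (leq_trans _ le_rb) ?leq_addl.
  rewrite (wrem_small le_xb) (wrem_small le_yb) in le_rb.
  exists 0 => //.
  by rewrite !wquo_small // !wrem_small // mul0n !addn0.
have [e le_e2 [range_r le_ear]] : exists2 e, e <= 2 &
    b < wrem x + wrem y - e * a <= a + b /\ e * a <= wrem x + wrem y.
  case: (leqP (wrem x + wrem y) (a + b)) => [le_rab|lt_rab].
    by exists 0; rewrite // mul0n subn0 lt_br le_rab.
  by case: (leqP (wrem x + wrem y) (2 * a + b)) => ?; [exists 1 | exists 2]; lia.
have [Eq Er] := wdiv_carry Exy le_ear range_r.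
exists e => //; split=> // _.
by move: range_r; rewrite -Er addnK => /andP[].
Qed.

Lemma piab_wrap r e : b < r <= a + b -> piab a b (r + e * a) = r.
Proof.
case/andP=> lt_br le_r; rewrite /piab [r + _]addnC modnMDl.
case: (ltnP r a) => [lt_ra|le_ar].
  by rewrite modn_small // leqNgt lt_br addn0.
have lt_ra : r - a < a by rewrite ltn_subLR // (leq_ltn_trans le_r) // ltn_add2l.
have -> : r %% a = r - a by rewrite -{1}(subnK le_ar) modnDr modn_small.
by rewrite ifT ?subnK // leq_subLR.
Qed.

End ShiftedDivision.

Section Template.

Variables (a b n : nat) (t : nat -> 'I_n.+1).
Hypotheses (lt_ba : b < a) (t_tmpl : ws_template a b t).

Local Notation A := (part (a + b) t).

Lemma template_sum j r s : A j r -> A j s -> (r != s) || (b < r) -> ~~ A j (r + s).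
Proof.
have [wsf [sf _]] := t_tmpl.
move=> Ar As neq_or_big; case: (eqVneq r s) neq_or_big => [<- /= lt_br|neq_rs _].
  have Ar' : A j r && (b < r) by rewrite Ar.
  by apply: contraNN (sf j r r Ar' Ar') => ->; rewrite ltn_addr.
exact: wsf.
Qed.

Lemma template_carry (j : 'I_n.+1) r s u e : j < n -> 0 < e -> b < u ->
  A j r -> A j s -> r + s = u + e * a -> ~~ A j u.
Proof.
have [_ [_ [_ iv]]] := t_tmpl.
move=> j_lt e_gt0 lt_bu Ar As Ers; apply/negP => Au.
have le_u : u <= a + b by case/andP: Au => /andP[].
suff /(iv j j_lt r s Ar As) : a + b < r + s by rewrite Ers piab_wrap ?lt_bu // Au.
rewrite Ers; have := leq_pmull a e_gt0; lia.
Qed.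

Lemma template_last_double_carry (j : 'I_n.+1) r s u : n <= j -> b < u ->
  A j r -> A j s -> r + s = u + 2 * a -> ~~ A j u.
Proof.
have [_ [_ [iii _]]] := t_tmpl.
move=> n_le_j lt_bu Ar As Ers.
have j_last : j.+1 = n.+1 by apply/eqP; rewrite eqSS eqn_leq -ltnS ltn_ord.
have := iii j j_last r s Ar As; rewrite Ers addnK; apply.
by rewrite ltn_add2r.
Qed.

End Template.

Section Glue.

Variables (a b p k n : nat) (c : nat -> 'I_k) (t : nat -> 'I_n.+1).
Hypotheses (lt_ba : b < a) (p_gt0 : 0 < p).
Hypotheses (c_sf : sf_partition p c) (t_tmpl : ws_template a b t).

Local Notation wquo := (wquo a b).
Local Notation wrem := (wrem a b).

Definition glue_class x : 'I_k + 'I_n :=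
  if unlift ord_max (t (wrem x)) is Some j then inr j else inl (c (wquo x).+1).

Definition glue_colour x : 'I_(k + n) := unsplit (glue_class x).

Lemma glue_colour_eq x y : glue_colour x = glue_colour y ->
  t (wrem x) = t (wrem y) /\ (n <= t (wrem x) -> c (wquo x).+1 = c (wquo y).+1).
Proof.
move/(can_inj unsplitK); rewrite /glue_class.
case: unliftP => [j ->|->]; case: unliftP => [j' ->|->] // [eq_j]; split=> //.
- by rewrite eq_j.
- by rewrite lift_max leqNgt ltn_ord.
Qed.

Lemma glue_colour_wsf : wsf_partition (p * a + b) glue_colour.
Proof.
move=> i x y /andP[x_in /eqP cx] /andP[y_in /eqP cy] neq_xy.
apply/negP => /andP[z_in /eqP cz].
have [txy cxy] := glue_colour_eq (etrans cx (esym cy)).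
have [txz cxz] := glue_colour_eq (etrans cx (esym cz)).
set j := t (wrem x) in txy cxy txz cxz.
have inA z : 1 <= z <= p * a + b -> t (wrem z) = j -> part (a + b) t j (wrem z).
  by case/andP=> z_gt0 _ tz; rewrite /part wrem_gt0 // wrem_le // tz eqxx.
have Ax := inA x x_in erefl.
have Ay := inA y y_in (esym txy).
have Az := inA _ z_in (esym txz).
have [e le_e2 [Eq Er carry]] := wdivD lt_ba x y.
case: (posnP e) => [e0|e_gt0].
  rewrite e0 mul0n addn0 in Er.
  have distinct_or_big : (wrem x != wrem y) || (b < wrem x).
    case: (eqVneq (wrem x) (wrem y)) => //= eq_r; rewrite ltnNge.
    by apply: contraTN neq_xy => /(wrem_eq_small eq_r) ->; rewrite negbK.
  by move: (template_sum t_tmpl Ax Ay distinct_or_big); rewrite Er Az.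
case: (ltnP j n) => [j_lt|n_le_j].
  by move: (template_carry lt_ba t_tmpl j_lt e_gt0 (carry e_gt0) Ax Ay Er); rewrite Az.
have [e1|e2] : e = 1 \/ e = 2 by lia.
  have inC z : 1 <= z <= p * a + b -> c (wquo z).+1 = c (wquo x).+1 ->
      part p c (c (wquo x).+1) (wquo z).+1.
    by case/andP=> _ le_z cz'; rewrite /part cz' eqxx andbT /= (wquo_lt lt_ba p_gt0 le_z).
  have := c_sf (inC x x_in erefl) (inC y y_in (esym (cxy n_le_j))).
  have -> : (wquo x).+1 + (wquo y).+1 = (wquo (x + y)).+1 by rewrite Eq e1 addn1 addSn addnS.
  by rewrite (inC _ z_in (esym (cxz n_le_j))).
rewrite e2 in Er.
by move: (template_last_double_carry t_tmpl n_le_j (carry e_gt0) Ax Ay Er); rewrite Az.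
Qed.

End Glue.

Theorem theorem3p17 (a n b p k : nat) :
  0 < a -> 0 < n -> 0 < b -> 0 < p -> 0 < k -> b < a ->
  (exists c : nat -> 'I_k, sf_partition p c) ->
  (exists t : nat -> 'I_n.+1, ws_template a b t) ->
  exists d : nat -> 'I_(k + n), wsf_partition (p * a + b) d.
Proof.
move=> _ _ _ p_gt0 _ lt_ba [c c_sf] [t t_tmpl].
by exists (glue_colour a b c t); apply: glue_colour_wsf.
Qed.
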